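(* Let $s,t,p\ge 1$, $A,B\in GL(n)$ and $Q\in\mathcal{P}(n)$. The equation $X^s+A^*X^{-t}A+B^*X^{-p}B=Q$ has a Hermitian positive definite solution if and only if $A$ and $B$ can be factored as $$A=(U\Lambda U^* )^{\frac{t}{2s}}N_1,\qquad B=(U\Lambda U^* )^{\frac{p}{2s}}N_2,$$ where $U$ is an $n\times n$ unitary matrix, $\Lambda$ is an $n\times n$ diagonal matrix with positive diagonal entries, $N_1,N_2$ are $n\times n$ matrices, and the $3n\times n$ matrix $$\begin{pmatrix}\Lambda^{1/2}U^*Q^{-1/2}\\ N_1Q^{-1/2}\\ N_2Q^{-1/2}\end{pmatrix}$$ is column orthonormal (i.e. $M^*M=I_n$ for this matrix $M$).
   Context: $GL(n)$: $n\times n$ complex nonsingular matrices; $\mathcal{P}(n)$: $n\times n$ Hermitian positive definite matrices. Real powers of positive definite matrices are defined by functional calculus. *)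

(* complex numbers built on Stdlib reals; n x n complex
   matrices represented as functions nat -> nat -> C, only entries with
   indices < n are meaningful (equality is [meq n]). *)
From Stdlib Require Import Reals Lra ClassicalEpsilon.
Open Scope R_scope.

Record C : Type := mkC { re : R; im : R }.

Definition C0 : C := mkC 0 0.
Definition C1 : C := mkC 1 0.
Definition RtoC (x : R) : C := mkC x 0.
Definition Cadd (a b : C) : C := mkC (re a + re b) (im a + im b).
Definition Cmul (a b : C) : C :=
  mkC (re a * re b - im a * im b) (re a * im b + im a * re b).
Definition Cconj (a : C) : C := mkC (re a) (- im a).

Fixpoint csum (n : nat) (f : nat -> C) : C :=
  match n with
  | O => C0
  | S k => Cadd (csum k f) (f k)
  end.

Definition Mat := nat -> nat -> C.

Definition meq (n : nat) (A B : Mat) : Prop :=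
  forall i j, (i < n)%nat -> (j < n)%nat -> A i j = B i j.

Definition mmul (m : nat) (A B : Mat) : Mat :=
  fun i j => csum m (fun k => Cmul (A i k) (B k j)).
Definition madd (A B : Mat) : Mat := fun i j => Cadd (A i j) (B i j).
Definition madj (A : Mat) : Mat := fun i j => Cconj (A j i).
Definition mid : Mat := fun i j => if Nat.eqb i j then C1 else C0.
Definition mdiag (d : nat -> R) : Mat :=
  fun i j => if Nat.eqb i j then RtoC (d i) else C0.

Definition invertible (n : nat) (A : Mat) : Prop :=
  exists B, meq n (mmul n A B) mid /\ meq n (mmul n B A) mid.
Definition unitary (n : nat) (U : Mat) : Prop :=
  meq n (mmul n (madj U) U) mid /\ meq n (mmul n U (madj U)) mid.
Definition hermitian (n : nat) (X : Mat) : Prop := meq n (madj X) X.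
Definition posdef (n : nat) (X : Mat) : Prop :=
  hermitian n X /\
  forall v : nat -> C, (exists i, (i < n)%nat /\ v i <> C0) ->
    0 < re (csum n (fun i => csum n (fun j =>
                Cmul (Cmul (Cconj (v i)) (X i j)) (v j)))).

(* Real power of a positive definite matrix by functional calculus:
   if X = U diag(l) U^* with U unitary and l > 0, then
   X^r = U diag(l^r) U^*.  (Chosen by epsilon; well defined on P(n).) *)
Definition mpow (n : nat) (X : Mat) (r : R) : Mat :=
  epsilon (inhabits mid) (fun Y => exists (U : Mat) (l : nat -> R),
     unitary n U /\ (forall i, (i < n)%nat -> 0 < l i) /\
     meq n X (mmul n (mmul n U (mdiag l)) (madj U)) /\
     Y = mmul n (mmul n U (mdiag (fun i => Rpower (l i) r))) (madj U)).

Definition stack3 (n : nat) (X Y Z : Mat) : Mat :=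
  fun i j => if Nat.ltb i n then X i j
             else if Nat.ltb i (2 * n) then Y (i - n)%nat j
             else Z (i - 2 * n)%nat j.

Definition col_orthonormal (m n : nat) (M : Mat) : Prop :=
  meq n (mmul m (madj M) M) mid.

(* Write a positive definite X as V diag(m) V^* with V unitary and m > 0, and put
   Λ = diag(m^s), so that X^s = V Λ V^*.  Then X^-t = (V Λ V^* )^(-t/s), hence
   A^* X^-t A is the Gram matrix N1^* N1 of N1 = (V Λ V^* )^(-t/(2s)) A, and
   A = (V Λ V^* )^(t/(2s)) N1; the same holds for B and p.  The equation becomes
        V Λ V^* + N1^* N1 + N2^* N2 = Q,                                     (★)
   and conjugating (★) by Q^(-1/2) says exactly that the stacked 3n x n matrix
   (Λ^(1/2) V^* Q^(-1/2); N1 Q^(-1/2); N2 Q^(-1/2)) has Gram matrix I_n.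
   Conversely a factorization yields the solution X = (U Λ U^* )^(1/s). *)

From Stdlib Require Import Reals Lra Lia ClassicalEpsilon Classical_Prop
  FunctionalExtensionality Setoid Morphisms.
From mathcomp Require ssreflect ssrfun ssrbool eqtype ssrnat fintype bigop ssralg
  ssrnum matrix sesquilinear spectral Rstruct.
From mathcomp.real_closed Require complex.
(* Imported last so that [C] denotes the complex numbers, not the binomial
   coefficient of the real-number library. *)
From Pilot Require Import Defs.
Open Scope R_scope.

Lemma C_ext (a b : C) : re a = re b -> im a = im b -> a = b.
Proof. destruct a, b; simpl; intros; subst; reflexivity. Qed.

Ltac cring := apply C_ext; unfold Cadd, Cmul, Cconj, RtoC, C0, C1; simpl; ring.

Lemma csum_ext n f g : (forall k, (k < n)%nat -> f k = g k) -> csum n f = csum n g.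
Proof.
  induction n; simpl; intros H; auto.
  rewrite IHn by (intros; apply H; lia). rewrite H by lia. reflexivity.
Qed.

Lemma csum_add n f g : csum n (fun k => Cadd (f k) (g k)) = Cadd (csum n f) (csum n g).
Proof. induction n; simpl. - cring. - rewrite IHn. cring. Qed.

Lemma csum_mull n c f : Cmul c (csum n f) = csum n (fun k => Cmul c (f k)).
Proof. induction n; simpl. - cring. - rewrite <- IHn. cring. Qed.

Lemma csum_mulr n c f : Cmul (csum n f) c = csum n (fun k => Cmul (f k) c).
Proof. induction n; simpl. - cring. - rewrite <- IHn. cring. Qed.

Lemma csum_conj n f : Cconj (csum n f) = csum n (fun k => Cconj (f k)).
Proof. induction n; simpl. - cring. - rewrite <- IHn. cring. Qed.

Lemma csum_swap n m f :
  csum n (fun i => csum m (fun j => f i j)) = csum m (fun j => csum n (fun i => f i j)).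
Proof.
  induction n; simpl.
  - induction m; simpl; [reflexivity | rewrite <- IHm; cring].
  - rewrite IHn, <- csum_add. reflexivity.
Qed.

Lemma csum_zero n f : (forall k, (k < n)%nat -> f k = C0) -> csum n f = C0.
Proof.
  induction n; simpl; intros H; auto.
  rewrite IHn by (intros; apply H; lia). rewrite H by lia. cring.
Qed.

Lemma csum_delta n f j :
  (j < n)%nat -> (forall k, (k < n)%nat -> k <> j -> f k = C0) -> csum n f = f j.
Proof.
  induction n; simpl; intros Hj H; [lia|].
  destruct (Nat.eq_dec j n) as [->|Hjn].
  - rewrite csum_zero by (intros; apply H; lia). cring.
  - rewrite IHn, (H n) by (try lia; intros; apply H; lia). cring.
Qed.

Lemma csum_split a b f :
  csum (a + b) f = Cadd (csum a f) (csum b (fun k => f (a + k)%nat)).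
Proof.
  induction b; simpl.
  - rewrite Nat.add_0_r. cring.
  - rewrite Nat.add_succ_r. simpl. rewrite IHb. cring.
Qed.

Lemma re_csum_nonneg n f : (forall k, (k < n)%nat -> 0 <= re (f k)) -> 0 <= re (csum n f).
Proof.
  induction n; simpl; intros H; [lra|].
  pose proof (IHn (fun k Hk => H k ltac:(lia))). pose proof (H n ltac:(lia)). lra.
Qed.

Lemma re_csum_pos n f :
  (forall k, (k < n)%nat -> 0 <= re (f k)) -> (exists k, (k < n)%nat /\ 0 < re (f k)) ->
  0 < re (csum n f).
Proof.
  induction n; simpl; intros H [k [Hk Hpos]]; [lia|].
  pose proof (H n ltac:(lia)).
  destruct (Nat.eq_dec k n) as [->|Hkn].
  - pose proof (re_csum_nonneg n f (fun k Hk => H k ltac:(lia))). lra.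
  - assert (0 < re (csum n f)).
    { apply IHn; [intros; apply H; lia | exists k; split; [lia | exact Hpos]]. }
    lra.
Qed.

Lemma re_scaled_sqnorm_nonneg d w : 0 <= d -> 0 <= re (Cmul (RtoC d) (Cmul (Cconj w) w)).
Proof. intros. destruct w as [a b]. unfold Cmul, RtoC, Cconj; simpl. nra. Qed.

Lemma re_scaled_sqnorm_pos d w :
  0 < d -> w <> C0 -> 0 < re (Cmul (RtoC d) (Cmul (Cconj w) w)).
Proof.
  intros Hd Hw. destruct w as [a b]. unfold Cmul, RtoC, Cconj; simpl.
  assert (Hab : a <> 0 \/ b <> 0).
  { destruct (Req_dec a 0) as [->|]; [|now left].
    destruct (Req_dec b 0) as [->|]; [|now right]. exfalso; apply Hw; reflexivity. }
  destruct Hab as [H|H]; [pose proof (Rsqr_pos_lt a H) | pose proof (Rsqr_pos_lt b H)];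
    unfold Rsqr in *; nra.
Qed.

Lemma mat_ext (A B : Mat) : (forall i j, A i j = B i j) -> A = B.
Proof.
  intros H. apply functional_extensionality; intro i.
  apply functional_extensionality; intro j. apply H.
Qed.

(* Identities of the matrix algebra that hold for all entries, not only those
   below n. *)
Lemma mmul_assoc n A B D : mmul n (mmul n A B) D = mmul n A (mmul n B D).
Proof.
  apply mat_ext; intros i j; unfold mmul.
  transitivity (csum n (fun k => csum n (fun l => Cmul (A i l) (Cmul (B l k) (D k j))))).
  - apply csum_ext; intros. rewrite csum_mulr. apply csum_ext; intros. cring.
  - rewrite csum_swap. apply csum_ext; intros. rewrite csum_mull. reflexivity.
Qed.

Lemma madj_mmul n A B : madj (mmul n A B) = mmul n (madj B) (madj A).
Proof.
  apply mat_ext; intros i j; unfold madj, mmul.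
  rewrite csum_conj. apply csum_ext; intros. cring.
Qed.

Lemma madj_madj A : madj (madj A) = A.
Proof. apply mat_ext; intros i j; unfold madj. cring. Qed.

Lemma mmul_madd_l n A B D : mmul n (madd A B) D = madd (mmul n A D) (mmul n B D).
Proof.
  apply mat_ext; intros i j; unfold madd, mmul.
  rewrite <- csum_add. apply csum_ext; intros. cring.
Qed.

Lemma mmul_madd_r n A B D : mmul n D (madd A B) = madd (mmul n D A) (mmul n D B).
Proof.
  apply mat_ext; intros i j; unfold madd, mmul.
  rewrite <- csum_add. apply csum_ext; intros. cring.
Qed.

Lemma madj_mdiag d : madj (mdiag d) = mdiag d.
Proof.
  apply mat_ext; intros i j; unfold madj, mdiag.
  destruct (Nat.eqb_spec j i), (Nat.eqb_spec i j); subst; try lia; cring.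
Qed.

Lemma mdiag_one : mdiag (fun _ => 1) = mid.
Proof. apply mat_ext; intros i j; unfold mid, mdiag. destruct (Nat.eqb i j); cring. Qed.

Lemma madj_mid : madj mid = mid.
Proof. rewrite <- mdiag_one, madj_mdiag. reflexivity. Qed.

#[global] Instance meq_equiv n : Equivalence (meq n).
Proof.
  split; unfold meq.
  - intros A i j _ _. reflexivity.
  - intros A B H i j Hi Hj. symmetry. auto.
  - intros A B D H1 H2 i j Hi Hj. rewrite H1, H2; auto.
Qed.

#[global] Instance mmul_proper n : Proper (meq n ==> meq n ==> meq n) (mmul n).
Proof.
  intros A A' HA B B' HB i j Hi Hj. unfold mmul.
  apply csum_ext; intros. rewrite HA, HB; auto.
Qed.

#[global] Instance madd_proper n : Proper (meq n ==> meq n ==> meq n) madd.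
Proof. intros A A' HA B B' HB i j Hi Hj. unfold madd. rewrite HA, HB; auto. Qed.

#[global] Instance madj_proper n : Proper (meq n ==> meq n) madj.
Proof. intros A A' HA i j Hi Hj. unfold madj. rewrite HA; auto. Qed.

Lemma eq_meq n A B : A = B -> meq n A B.
Proof. intros ->. reflexivity. Qed.

Lemma mmul_mid_l n A : meq n (mmul n mid A) A.
Proof.
  intros i j Hi Hj. unfold mmul, mid. rewrite (csum_delta n _ i Hi).
  - rewrite Nat.eqb_refl. cring.
  - intros k Hk Hki. destruct (Nat.eqb_spec i k); [lia | cring].
Qed.

Lemma mmul_mid_r n A : meq n (mmul n A mid) A.
Proof.
  intros i j Hi Hj. unfold mmul, mid. rewrite (csum_delta n _ j Hj).
  - rewrite Nat.eqb_refl. cring.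
  - intros k Hk Hkj. destruct (Nat.eqb_spec k j); [lia | cring].
Qed.

Lemma mmul_mdiag_r n A d i j :
  (j < n)%nat -> mmul n A (mdiag d) i j = Cmul (A i j) (RtoC (d j)).
Proof.
  intros Hj. unfold mmul, mdiag. rewrite (csum_delta n _ j Hj).
  - rewrite Nat.eqb_refl. reflexivity.
  - intros k Hk Hkj. destruct (Nat.eqb_spec k j); [lia | cring].
Qed.

Lemma mmul_mdiag_l n A d i j :
  (i < n)%nat -> mmul n (mdiag d) A i j = Cmul (RtoC (d i)) (A i j).
Proof.
  intros Hi. unfold mmul, mdiag. rewrite (csum_delta n _ i Hi).
  - rewrite Nat.eqb_refl. reflexivity.
  - intros k Hk Hki. destruct (Nat.eqb_spec i k); [lia | cring].
Qed.

Lemma mdiag_mul n a b : meq n (mmul n (mdiag a) (mdiag b)) (mdiag (fun i => a i * b i)).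
Proof.
  intros i j Hi Hj. rewrite mmul_mdiag_r by exact Hj. unfold mdiag.
  destruct (Nat.eqb_spec i j); subst; cring.
Qed.

Lemma mdiag_ext n a b : (forall i, (i < n)%nat -> a i = b i) -> meq n (mdiag a) (mdiag b).
Proof. intros H i j Hi Hj. unfold mdiag. rewrite H by exact Hi. reflexivity. Qed.

Lemma mid_unitary n : unitary n mid.
Proof. unfold unitary. rewrite madj_mid, mmul_mid_l. split; reflexivity. Qed.

Lemma gram_herm_left n P A Y :
  madj P = P -> meq n (mmul n P P) Y ->
  meq n (mmul n (madj (mmul n P A)) (mmul n P A)) (mmul n (mmul n (madj A) Y) A).
Proof.
  intros HP H. rewrite madj_mmul, HP, <- H. apply eq_meq. rewrite !mmul_assoc. reflexivity.
Qed.

Lemma gram_congruence_cancel n N P Y :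
  madj P = P -> meq n (mmul n (mmul n P Y) P) mid ->
  meq n (mmul n (mmul n (madj (mmul n P N)) Y) (mmul n P N)) (mmul n (madj N) N).
Proof.
  intros HP H. rewrite madj_mmul, HP.
  transitivity (mmul n (madj N) (mmul n (mmul n (mmul n P Y) P) N)).
  - apply eq_meq. rewrite !mmul_assoc. reflexivity.
  - rewrite H, mmul_mid_l. reflexivity.
Qed.

Definition spectral_form (n : nat) (U : Mat) (d : nat -> R) : Mat :=
  mmul n (mmul n U (mdiag d)) (madj U).

Definition rpow (d : nat -> R) (r : R) : nat -> R := fun i => Rpower (d i) r.

Lemma Rpower_pos x r : 0 < Rpower x r.
Proof. apply exp_pos. Qed.

Lemma Rpower_add_eq x a b c : a + b = c -> Rpower x a * Rpower x b = Rpower x c.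
Proof. intros <-. rewrite Rpower_plus. reflexivity. Qed.

Lemma spectral_form_adj n U d : madj (spectral_form n U d) = spectral_form n U d.
Proof.
  unfold spectral_form. rewrite !madj_mmul, madj_madj, madj_mdiag, mmul_assoc. reflexivity.
Qed.

Lemma spectral_form_ext n U a b :
  (forall i, (i < n)%nat -> a i = b i) -> meq n (spectral_form n U a) (spectral_form n U b).
Proof. intros H. unfold spectral_form. rewrite (mdiag_ext n a b H). reflexivity. Qed.

Lemma spectral_form_mul n U a b : unitary n U ->
  meq n (mmul n (spectral_form n U a) (spectral_form n U b))
        (spectral_form n U (fun i => a i * b i)).
Proof.
  intros [HU _]. unfold spectral_form. rewrite !mmul_assoc.
  rewrite <- (mmul_assoc n (madj U) U), HU, mmul_mid_l.
  rewrite <- (mmul_assoc n (mdiag a)), mdiag_mul. reflexivity.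
Qed.

Lemma spectral_form_id n U a : unitary n U ->
  (forall i, (i < n)%nat -> a i = 1) -> meq n (spectral_form n U a) mid.
Proof.
  intros [_ HU] H. rewrite (spectral_form_ext n U a (fun _ => 1) H).
  unfold spectral_form. rewrite mdiag_one, mmul_mid_r. exact HU.
Qed.

Lemma spectral_form_rpow_mul n U l a b : unitary n U ->
  meq n (mmul n (spectral_form n U (rpow l a)) (spectral_form n U (rpow l b)))
        (spectral_form n U (rpow l (a + b))).
Proof.
  intros HU. rewrite spectral_form_mul by exact HU.
  apply spectral_form_ext. intros i _. unfold rpow. apply Rpower_add_eq. reflexivity.
Qed.

Lemma spectral_form_rpow_zero n U l : unitary n U -> (forall i, (i < n)%nat -> 0 < l i) ->
  meq n (spectral_form n U (rpow l 0)) mid.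
Proof. intros HU Hl. apply spectral_form_id; [exact HU|]. intros i Hi. apply Rpower_O, Hl, Hi. Qed.

(* A matrix W intertwining diag(l) and diag(m) also intertwines diag(f o l) and
   diag(f o m): its entry (i, j) vanishes unless l j = m i. *)
Lemma intertwine_mdiag_fun n W l m (f : R -> R) :
  meq n (mmul n W (mdiag l)) (mmul n (mdiag m) W) ->
  meq n (mmul n W (mdiag (fun i => f (l i)))) (mmul n (mdiag (fun i => f (m i))) W).
Proof.
  intros HW i j Hi Hj. specialize (HW i j Hi Hj).
  rewrite mmul_mdiag_r, mmul_mdiag_l in * by assumption.
  destruct (Req_dec (l j) (m i)) as [E|E]; [rewrite E; cring|].
  assert (Wij : W i j = C0).
  { destruct (W i j) as [a b]. unfold Cmul, RtoC in HW; simpl in HW.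
    injection HW; intros Him Hre. apply C_ext; simpl.
    - apply Rmult_eq_reg_r with (l j - m i); [lra | lra].
    - apply Rmult_eq_reg_r with (l j - m i); [lra | lra]. }
  rewrite Wij. cring.
Qed.

Lemma spectral_form_fun_unique n U V l m (f : R -> R) : unitary n U -> unitary n V ->
  meq n (spectral_form n U l) (spectral_form n V m) ->
  meq n (spectral_form n U (fun i => f (l i))) (spectral_form n V (fun i => f (m i))).
Proof.
  intros [HU1 HU2] [HV1 HV2] H.
  set (W := mmul n (madj V) U).
  assert (HW : meq n (mmul n W (mdiag l)) (mmul n (mdiag m) W)).
  { unfold W. transitivity (mmul n (madj V) (mmul n (spectral_form n U l) U)).
    - unfold spectral_form. rewrite !mmul_assoc, HU1, mmul_mid_r. reflexivity.
    - rewrite H. unfold spectral_form. rewrite <- !mmul_assoc, HV1, mmul_mid_l. reflexivity. }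
  transitivity (mmul n (mmul n (mmul n V W) (mdiag (fun i => f (l i)))) (madj U)).
  - unfold W, spectral_form. rewrite <- (mmul_assoc n V), HV2, mmul_mid_l. reflexivity.
  - rewrite (mmul_assoc n V W), (intertwine_mdiag_fun n W l m f HW).
    unfold W, spectral_form. rewrite !mmul_assoc, HU2, mmul_mid_r. reflexivity.
Qed.

Lemma mpow_spectral n X r U l : unitary n U -> (forall i, (i < n)%nat -> 0 < l i) ->
  meq n X (spectral_form n U l) -> meq n (mpow n X r) (spectral_form n U (rpow l r)).
Proof.
  intros HU Hl HX. unfold mpow.
  match goal with |- meq n (epsilon ?i ?P) _ =>
    destruct (epsilon_spec i P) as (V & m & HV & Hm & HXm & ->) end.
  - exists (spectral_form n U (rpow l r)), U, l. repeat split; auto; apply HU.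
  - symmetry. apply (spectral_form_fun_unique n U V l m (fun x => Rpower x r)); auto.
    rewrite <- HX. exact HXm.
Qed.

Lemma mpow_spectral_form n U l r : unitary n U -> (forall i, (i < n)%nat -> 0 < l i) ->
  meq n (mpow n (spectral_form n U l) r) (spectral_form n U (rpow l r)).
Proof. intros HU Hl. apply mpow_spectral; [exact HU | exact Hl | reflexivity]. Qed.

Lemma mpow_mdiag n l r : (forall i, (i < n)%nat -> 0 < l i) ->
  meq n (mpow n (mdiag l) r) (mdiag (rpow l r)).
Proof.
  intros Hl.
  assert (Hdiag : forall d, meq n (spectral_form n mid d) (mdiag d)).
  { intros d. unfold spectral_form. rewrite madj_mid, mmul_mid_l, mmul_mid_r. reflexivity. }
  rewrite (mpow_spectral n (mdiag l) r mid l (mid_unitary n) Hl) by (symmetry; apply Hdiag).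
  apply Hdiag.
Qed.

(* The spectral theorem for Hermitian matrices, transferred from MathComp's
   [orthomx_spectralP] over the complex numbers built on the reals. *)
Module HermitianSpectral.
Import ssreflect ssrfun ssrbool eqtype ssrnat fintype bigop ssralg ssrnum matrix
  sesquilinear spectral Rstruct mathcomp.real_closed.complex.
Import GRing.Theory Num.Theory.
Local Open Scope ring_scope.
Local Open Scope sesquilinear_scope.

Notation CR := (complex Rdefinitions.R).

Definition toCR (c : Defs.C) : CR := Complex (re c) (im c).
Definition ofCR (z : CR) : Defs.C := mkC (complex.Re z) (complex.Im z).

Lemma ofCR_add x y : ofCR (x + y) = Cadd (ofCR x) (ofCR y).
Proof. by case: x; case: y. Qed.

Lemma ofCR_mul x y : ofCR (x * y) = Cmul (ofCR x) (ofCR y).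
Proof. by case: x; case: y. Qed.

Lemma ofCR_conj x : ofCR (x^*)%C = Cconj (ofCR x).
Proof. by case: x. Qed.

Lemma ofCR_toCR c : ofCR (toCR c) = c.
Proof. by case: c. Qed.

Lemma ofCR_sum n (F : nat -> CR) :
  ofCR (\sum_(k < n) F k) = csum n (fun k => ofCR (F k)).
Proof. by elim: n => [|n IH]; rewrite ?big_ord0 // big_ord_recr /= ofCR_add IH. Qed.

Section Transfer.
Variable m : nat.
Local Notation n := m.+1.

Definition ofM (M : 'M[CR]_n) : Mat := fun i j => ofCR (M (inord i) (inord j)).

Lemma inord_eqb i j : (i < n)%N -> (j < n)%N -> (inord i == inord j :> 'I_n) = Nat.eqb i j.
Proof.
move=> Hi Hj; apply/eqP/PeanoNat.Nat.eqb_spec => [/(congr1 val)|->] //.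
by rewrite /= !inordK.
Qed.

Lemma ofM_mul (A B : 'M[CR]_n) : meq n (ofM (A *m B)) (mmul n (ofM A) (ofM B)).
Proof.
move=> i j _ _; rewrite /ofM mxE /mmul.
pose F k := A (inord i) (inord k) * B (inord k) (inord j).
rewrite (eq_bigr (fun k : 'I_n => F k)) => [|k _]; last by rewrite /F inord_val.
by rewrite ofCR_sum; apply: csum_ext => k _; rewrite ofCR_mul.
Qed.

Lemma ofM_1 : meq n (ofM 1%:M) mid.
Proof.
move=> i j /ssrnat.ltP Hi /ssrnat.ltP Hj.
by rewrite /ofM /mid mxE inord_eqb //; case: (Nat.eqb i j).
Qed.

Lemma ofM_adj (A : 'M[CR]_n) : ofM (A ^t*) = madj (ofM A).
Proof. by apply: mat_ext => i j; rewrite /ofM /madj !mxE ofCR_conj. Qed.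

Lemma ofM_diag (d : 'rV[CR]_n) : d \is a mxOver Num.real ->
  meq n (ofM (diag_mx d)) (mdiag (fun i => complex.Re (d ord0 (inord i)))).
Proof.
move=> /mxOverP Hd i j /ssrnat.ltP Hi /ssrnat.ltP Hj.
rewrite /ofM /mdiag mxE inord_eqb //; case: (Nat.eqb i j) => //.
by have := Hd ord0 (inord i); case: (d ord0 (inord i)) => a b; rewrite complex_real => /eqP ->.
Qed.

(* [Defs.hermitian] is qualified: MathComp's sesquilinear theory has its own. *)
Lemma hermitian_spectral_succ (X : Mat) : Defs.hermitian n X ->
  exists U l, unitary n U /\ meq n X (spectral_form n U l).
Proof.
move=> HX; pose M : 'M[CR]_n := \matrix_(i, j) toCR (X i j).
have HXM : meq n X (ofM M).
  by move=> i j /ssrnat.ltP Hi /ssrnat.ltP Hj; rewrite /ofM mxE !inordK // ofCR_toCR.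
have HM : M \is hermsymmx.
  rewrite is_hermitianmxE expr0 scale1r; apply/eqP/matrixP => i j; rewrite !mxE.
  have := HX i j (ssrnat.ltP (ltn_ord i)) (ssrnat.ltP (ltn_ord j)); rewrite /madj => <-.
  by case: (X j i).
have HP : spectralmx M \is unitarymx := spectral_unitarymx M.
have /orthomx_spectralP Hdec := hermitian_normalmx HM.
rewrite invmx_unitary // in Hdec.
have Hreal := hermitian_spectral_diag_real HM.
set P := spectralmx M in HP Hdec; set sp := spectral_diag M in Hdec Hreal.
have HadjU : madj (ofM (P ^t*)) = ofM P by rewrite -ofM_adj trmxCK.
exists (ofM (P ^t*)), (fun i => complex.Re (sp ord0 (inord i))); split; [split|].
- by rewrite HadjU -ofM_mul; move/unitarymxP: HP => ->; exact: ofM_1.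
- rewrite HadjU -ofM_mul -invmx_unitary // mulVmx; [exact: ofM_1 | exact: unitarymx_unit].
- by rewrite HXM Hdec /spectral_form HadjU !ofM_mul ofM_diag //; reflexivity.
Qed.

End Transfer.
End HermitianSpectral.

Lemma hermitian_spectral n (X : Mat) : hermitian n X ->
  exists U l, unitary n U /\ meq n X (spectral_form n U l).
Proof.
  destruct n as [|m].
  - intros _. exists mid, (fun _ => 0). split; [split|]; intros i j Hi; lia.
  - apply HermitianSpectral.hermitian_spectral_succ.
Qed.

Definition qform (n : nat) (X : Mat) (v : nat -> C) : C :=
  csum n (fun i => csum n (fun j => Cmul (Cmul (Cconj (v i)) (X i j)) (v j))).

Lemma qform_meq n X Y v : meq n X Y -> qform n X v = qform n Y v.
Proof.
  intros H. unfold qform. apply csum_ext; intros i Hi; apply csum_ext; intros j Hj.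
  rewrite H by assumption. reflexivity.
Qed.

Definition ucoord (n : nat) (U : Mat) (v : nat -> C) (k : nat) : C :=
  csum n (fun j => Cmul (Cconj (U j k)) (v j)).

Lemma qform_spectral_form n U d v : qform n (spectral_form n U d) v =
  csum n (fun k => Cmul (RtoC (d k)) (Cmul (Cconj (ucoord n U v k)) (ucoord n U v k))).
Proof.
  unfold qform, ucoord.
  transitivity (csum n (fun i => csum n (fun j => csum n (fun k =>
     Cmul (Cmul (Cconj (v i)) (U i k)) (Cmul (RtoC (d k)) (Cmul (Cconj (U j k)) (v j))))))).
  { apply csum_ext; intros i _; apply csum_ext; intros j _.
    unfold spectral_form, mmul at 1. rewrite csum_mull, csum_mulr.
    apply csum_ext; intros k Hk. rewrite mmul_mdiag_r by exact Hk. unfold madj. cring. }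
  transitivity (csum n (fun i => csum n (fun k => csum n (fun j =>
     Cmul (Cmul (Cconj (v i)) (U i k)) (Cmul (RtoC (d k)) (Cmul (Cconj (U j k)) (v j))))))).
  { apply csum_ext; intros i _. apply csum_swap. }
  rewrite csum_swap. apply csum_ext; intros k _.
  rewrite csum_conj, csum_mulr, csum_mull. apply csum_ext; intros i _.
  rewrite !csum_mull. apply csum_ext; intros j _. cring.
Qed.

(* A vector whose coordinates in a unitary basis all vanish is zero (v = U U^* v). *)
Lemma ucoord_zero n U v : unitary n U ->
  (forall k, (k < n)%nat -> ucoord n U v k = C0) -> forall i, (i < n)%nat -> v i = C0.
Proof.
  intros [_ HU] Hw i Hi.
  transitivity (csum n (fun j => Cmul (mmul n U (madj U) i j) (v j))).
  - rewrite (csum_delta n _ i Hi).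
    + rewrite HU by exact Hi. unfold mid. rewrite Nat.eqb_refl. cring.
    + intros k Hk Hki. rewrite HU by assumption. unfold mid.
      destruct (Nat.eqb_spec i k); [lia | cring].
  - transitivity (csum n (fun k => Cmul (U i k) (ucoord n U v k))).
    + unfold mmul, madj, ucoord. transitivity (csum n (fun j => csum n (fun k =>
        Cmul (U i k) (Cmul (Cconj (U j k)) (v j))))).
      * apply csum_ext; intros j _. rewrite csum_mulr. apply csum_ext; intros. cring.
      * rewrite csum_swap. apply csum_ext; intros k _. rewrite csum_mull. reflexivity.
    + apply csum_zero. intros k Hk. rewrite Hw by exact Hk. cring.
Qed.

Lemma spectral_form_posdef n U d : unitary n U -> (forall i, (i < n)%nat -> 0 < d i) ->
  posdef n (spectral_form n U d).
Proof.
  intros HU Hd. split.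
  - unfold hermitian. rewrite spectral_form_adj. reflexivity.
  - intros v [i [Hi Hv]]. change (0 < re (qform n (spectral_form n U d) v)).
    rewrite qform_spectral_form.
    assert (Hk : exists k, (k < n)%nat /\ ucoord n U v k <> C0).
    { apply NNPP; intros Hnone. apply Hv. apply (ucoord_zero n U v HU); [|exact Hi].
      intros k Hk. apply NNPP; intros Hwk. apply Hnone. exists k; auto. }
    destruct Hk as [k [Hk Hwk]]. apply re_csum_pos.
    + intros j Hj. apply re_scaled_sqnorm_nonneg, Rlt_le, Hd, Hj.
    + exists k. split; [exact Hk|]. apply re_scaled_sqnorm_pos; [apply Hd, Hk | exact Hwk].
Qed.

Lemma qform_spectral_form_column n U d k : unitary n U -> (k < n)%nat ->
  qform n (spectral_form n U d) (fun i => U i k) = RtoC (d k).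
Proof.
  intros [HU _] Hk. rewrite qform_spectral_form.
  assert (Hcoord : forall j, (j < n)%nat -> ucoord n U (fun i => U i k) j = mid j k).
  { intros j Hj. exact (HU j k Hj Hk). }
  rewrite (csum_delta n _ k Hk).
  - rewrite Hcoord by exact Hk. unfold mid. rewrite Nat.eqb_refl. cring.
  - intros j Hj Hjk. rewrite Hcoord by exact Hj. unfold mid.
    destruct (Nat.eqb_spec j k); [lia | cring].
Qed.

Lemma unitary_column_nonzero n U k : unitary n U -> (k < n)%nat ->
  exists i, (i < n)%nat /\ U i k <> C0.
Proof.
  intros [HU _] Hk. apply NNPP; intros Hnone.
  assert (Hz : mmul n (madj U) U k k = C0).
  { unfold mmul, madj. apply csum_zero. intros j Hj.
    assert (U j k = C0) as -> by (apply NNPP; intro; apply Hnone; exists j; auto). cring. }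
  rewrite HU in Hz by exact Hk. unfold mid in Hz. rewrite Nat.eqb_refl in Hz.
  injection Hz. lra.
Qed.

Lemma posdef_spectral n X : posdef n X ->
  exists U l, unitary n U /\ (forall i, (i < n)%nat -> 0 < l i) /\ meq n X (spectral_form n U l).
Proof.
  intros [HX Hpos]. destruct (hermitian_spectral n X HX) as (U & l & HU & HXU).
  exists U, l. split; [exact HU | split; [|exact HXU]].
  intros k Hk.
  pose proof (Hpos (fun i => U i k) (unitary_column_nonzero n U k HU Hk)) as Hq.
  change (0 < re (qform n X (fun i => U i k))) in Hq.
  rewrite (qform_meq n X _ _ HXU), qform_spectral_form_column in Hq by assumption.
  exact Hq.
Qed.

Lemma stack3_gram n X Y Z :
  meq n (mmul (3 * n) (madj (stack3 n X Y Z)) (stack3 n X Y Z))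
        (madd (madd (mmul n (madj X) X) (mmul n (madj Y) Y)) (mmul n (madj Z) Z)).
Proof.
  intros i j Hi Hj. unfold mmul at 1. replace (3 * n)%nat with (n + (n + n))%nat by lia.
  rewrite !csum_split.
  match goal with |- Cadd ?a (Cadd ?b ?c) = _ => transitivity (Cadd (Cadd a b) c); [cring|] end.
  unfold madd, mmul. f_equal; [f_equal|];
    apply csum_ext; intros k Hk; unfold madj, stack3.
  - rewrite (proj2 (Nat.ltb_lt k n) Hk). reflexivity.
  - rewrite (proj2 (Nat.ltb_ge (n + k) n)), (proj2 (Nat.ltb_lt (n + k) (2 * n))) by lia.
    replace (n + k - n)%nat with k by lia. reflexivity.
  - rewrite (proj2 (Nat.ltb_ge (n + (n + k)) n)), (proj2 (Nat.ltb_ge (n + (n + k)) (2 * n)))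
      by lia.
    replace (n + (n + k) - 2 * n)%nat with k by lia. reflexivity.
Qed.

Lemma gram_mul_herm_right n W R : meq n (madj R) R ->
  meq n (mmul n (madj (mmul n W R)) (mmul n W R)) (mmul n (mmul n R (mmul n (madj W) W)) R).
Proof.
  intros HR. rewrite madj_mmul, HR. apply eq_meq. rewrite !mmul_assoc. reflexivity.
Qed.

Lemma gram_sqrt_spectral n U lam : (forall i, (i < n)%nat -> 0 < lam i) ->
  meq n (mmul n (madj (mmul n (mpow n (mdiag lam) (1 / 2)) (madj U)))
               (mmul n (mpow n (mdiag lam) (1 / 2)) (madj U)))
        (spectral_form n U lam).
Proof.
  intros Hlam. rewrite mpow_mdiag by exact Hlam.
  rewrite madj_mmul, madj_madj, madj_mdiag, mmul_assoc, <- (mmul_assoc n (mdiag _)), mdiag_mul.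
  unfold spectral_form. rewrite <- mmul_assoc. apply mmul_proper; [|reflexivity].
  apply mmul_proper; [reflexivity|]. apply mdiag_ext. intros i Hi. unfold rpow.
  rewrite (Rpower_add_eq _ _ _ 1) by lra. apply Rpower_1, Hlam, Hi.
Qed.

Lemma congruence_id_iff n R S K :
  meq n (mmul n S R) mid -> meq n (mmul n R S) mid ->
  meq n (mmul n (mmul n R K) R) mid <-> meq n K (mmul n S S).
Proof.
  intros HSR HRS. split; intros H.
  - transitivity (mmul n (mmul n (mmul n S R) K) (mmul n R S)).
    + rewrite HSR, HRS, mmul_mid_l, mmul_mid_r. reflexivity.
    + transitivity (mmul n (mmul n S (mmul n (mmul n R K) R)) S).
      * apply eq_meq. rewrite !mmul_assoc. reflexivity.
      * rewrite H, mmul_mid_r. reflexivity.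
  - rewrite H. transitivity (mmul n (mmul n R S) (mmul n S R)).
    + apply eq_meq. rewrite !mmul_assoc. reflexivity.
    + rewrite HSR, HRS, mmul_mid_l. reflexivity.
Qed.

Lemma inv_sqrt_posdef n Q : posdef n Q ->
  meq n (madj (mpow n Q (- (1 / 2)))) (mpow n Q (- (1 / 2))) /\
  exists S, meq n (mmul n S (mpow n Q (- (1 / 2)))) mid /\
            meq n (mmul n (mpow n Q (- (1 / 2))) S) mid /\ meq n (mmul n S S) Q.
Proof.
  intros HQ. destruct (posdef_spectral n Q HQ) as (V & q & HV & Hq & HQV).
  pose proof (mpow_spectral n Q (- (1 / 2)) V q HV Hq HQV) as HR.
  split; [rewrite HR, spectral_form_adj; reflexivity|].
  exists (spectral_form n V (rpow q (1 / 2))).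
  rewrite HR, !spectral_form_rpow_mul by exact HV.
  split; [|split].
  - rewrite Rplus_opp_r. apply spectral_form_rpow_zero; assumption.
  - rewrite Rplus_opp_l. apply spectral_form_rpow_zero; assumption.
  - rewrite HQV. apply spectral_form_ext. intros i Hi. unfold rpow.
    replace (1 / 2 + 1 / 2) with 1 by lra. apply Rpower_1, Hq, Hi.
Qed.

Lemma orthonormal_stack_iff n Q U lam N1 N2 :
  posdef n Q -> (forall i, (i < n)%nat -> 0 < lam i) ->
  col_orthonormal (3 * n) n
    (stack3 n
       (mmul n (mmul n (mpow n (mdiag lam) (1 / 2)) (madj U)) (mpow n Q (- (1 / 2))))
       (mmul n N1 (mpow n Q (- (1 / 2))))
       (mmul n N2 (mpow n Q (- (1 / 2)))))
  <-> meq n (madd (madd (spectral_form n U lam) (mmul n (madj N1) N1)) (mmul n (madj N2) N2)) Q.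
Proof.
  intros HQ Hlam. unfold col_orthonormal.
  destruct (inv_sqrt_posdef n Q HQ) as [HR (S & HSR & HRS & HSS)].
  set (R := mpow n Q (- (1 / 2))) in *.
  rewrite stack3_gram, !(gram_mul_herm_right n _ R HR), gram_sqrt_spectral by exact Hlam.
  rewrite <- !mmul_madd_l, <- !mmul_madd_r, congruence_id_iff by eassumption.
  rewrite HSS. reflexivity.
Qed.

Lemma rpow_rpow d a b : rpow (rpow d a) b = rpow d (a * b).
Proof. apply functional_extensionality; intro i. apply Rpower_mult. Qed.

(* One coefficient, forward: if X = V diag(m) V^* and s > 0, then with
   Λ = diag(m^s) the matrix N = V diag(m^(-t/2)) V^* A, i.e. (V Λ V^* )^(-t/(2s)) A,
   satisfies A = (V Λ V^* )^(t/(2s)) N and A^* X^(-t) A = N^* N. *)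
Lemma coefficient_factor n V m s t A X :
  unitary n V -> (forall i, (i < n)%nat -> 0 < m i) -> 0 < s ->
  meq n X (spectral_form n V m) ->
  exists N, meq n A (mmul n (mpow n (spectral_form n V (rpow m s)) (t / (2 * s))) N) /\
            meq n (mmul n (mmul n (madj A) (mpow n X (- t))) A) (mmul n (madj N) N).
Proof.
  intros HV Hm Hs HX.
  assert (Hlam : forall i, (i < n)%nat -> 0 < rpow m s i) by (intros; apply Rpower_pos).
  exists (mmul n (spectral_form n V (rpow m (- (t / 2)))) A). split.
  - rewrite (mpow_spectral_form n V (rpow m s) _ HV Hlam), rpow_rpow, <- mmul_assoc, spectral_form_rpow_mul by exact HV.
    replace (s * (t / (2 * s)) + - (t / 2)) with 0 by (field; lra).
    rewrite spectral_form_rpow_zero, mmul_mid_l by assumption. reflexivity.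
  - rewrite (mpow_spectral n X (- t) V m HV Hm HX).
    symmetry. apply gram_herm_left; [apply spectral_form_adj|].
    rewrite spectral_form_rpow_mul by exact HV.
    replace (- (t / 2) + - (t / 2)) with (- t) by lra. reflexivity.
Qed.

Lemma coefficient_unfactor n U lam s t A N :
  unitary n U -> (forall i, (i < n)%nat -> 0 < lam i) -> 0 < s ->
  meq n A (mmul n (mpow n (spectral_form n U lam) (t / (2 * s))) N) ->
  meq n (mmul n (mmul n (madj A) (mpow n (spectral_form n U (rpow lam (1 / s))) (- t))) A)
        (mmul n (madj N) N).
Proof.
  intros HU Hlam Hs HA.
  assert (Hroot : forall i, (i < n)%nat -> 0 < rpow lam (1 / s) i) by (intros; apply Rpower_pos).
  rewrite (mpow_spectral_form n U _ _ HU Hroot), rpow_rpow.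
  rewrite HA, (mpow_spectral_form n U lam _ HU Hlam).
  apply gram_congruence_cancel; [apply spectral_form_adj|].
  rewrite !spectral_form_rpow_mul by exact HU.
  replace (t / (2 * s) + 1 / s * - t + t / (2 * s)) with 0 by (field; lra).
  apply spectral_form_rpow_zero; assumption.
Qed.

Theorem mainTheorem11 (n : nat) (s t p : R) (A B Q : Mat) :
  1 <= s -> 1 <= t -> 1 <= p ->
  invertible n A -> invertible n B -> posdef n Q ->
  ((exists X : Mat, posdef n X /\
      meq n (madd (madd (mpow n X s)
                        (mmul n (mmul n (madj A) (mpow n X (- t))) A))
                  (mmul n (mmul n (madj B) (mpow n X (- p))) B)) Q)
   <->
   (exists (U : Mat) (lam : nat -> R) (N1 N2 : Mat),
      unitary n U /\ (forall i, (i < n)%nat -> 0 < lam i) /\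
      meq n A (mmul n (mpow n (mmul n (mmul n U (mdiag lam)) (madj U)) (t / (2 * s))) N1) /\
      meq n B (mmul n (mpow n (mmul n (mmul n U (mdiag lam)) (madj U)) (p / (2 * s))) N2) /\
      col_orthonormal (3 * n) n
        (stack3 n
           (mmul n (mmul n (mpow n (mdiag lam) (1 / 2)) (madj U)) (mpow n Q (- (1 / 2))))
           (mmul n N1 (mpow n Q (- (1 / 2))))
           (mmul n N2 (mpow n Q (- (1 / 2))))))).
Proof.
  intros Hs _ _ _ _ HQ. assert (Hs0 : 0 < s) by lra. split.
  -
    intros [X [HX Heq]].
    destruct (posdef_spectral n X HX) as (V & m & HV & Hm & HXV).
    destruct (coefficient_factor n V m s t A X HV Hm Hs0 HXV) as (N1 & HA & HN1).
    destruct (coefficient_factor n V m s p B X HV Hm Hs0 HXV) as (N2 & HB & HN2).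
    exists V, (rpow m s), N1, N2.
    split; [exact HV | split; [intros; apply Rpower_pos | split; [exact HA | split; [exact HB|]]]].
    apply orthonormal_stack_iff; [exact HQ | intros; apply Rpower_pos |].
    rewrite <- Heq, <- HN1, <- HN2, (mpow_spectral n X s V m HV Hm HXV). reflexivity.
  -
    intros (U & lam & N1 & N2 & HU & Hlam & HA & HB & Horth).
    apply orthonormal_stack_iff in Horth; [|exact HQ | exact Hlam].
    assert (Hroot : forall i, (i < n)%nat -> 0 < rpow lam (1 / s) i)
      by (intros; apply Rpower_pos).
    exists (spectral_form n U (rpow lam (1 / s))).
    split; [exact (spectral_form_posdef n U _ HU Hroot)|].
    rewrite <- Horth, (coefficient_unfactor n U lam s t A N1 HU Hlam Hs0 HA),
      (coefficient_unfactor n U lam s p B N2 HU Hlam Hs0 HB),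
      (mpow_spectral_form n U _ s HU Hroot), rpow_rpow.
    apply madd_proper; [apply madd_proper; [|reflexivity] | reflexivity].
    apply spectral_form_ext. intros i Hi. unfold rpow.
    replace (1 / s * s) with 1 by (field; lra). apply Rpower_1, Hlam, Hi.
Qed.
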